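(* Let $g\in C^1$ be a Riemannian metric on $\mathbb{R}^D$ written as $g_x(u,u)=u^{\top}H(x)u$, with $c_1\|u\|_2^2\le g_x(u,u)$ for all $x,u$ (some $c_1>0$) and $\|H(x)-H(y)\|_{\mathcal{B}}\le L_H\|x-y\|_2$ for all $x,y$. Then for all $i,j,k$ and all $x$, $$|\Gamma^k_{ij}(x)|\le\frac{3L_HD^{1/2}}{2c_1}.$$
   Context: $g_{ij}=H_{ij}$, $(g^{ij})$ is the inverse matrix of $(g_{ij})$, and the Christoffel symbols are $\Gamma^k_{ij}=\frac12\sum_{\ell=1}^D g^{k\ell}\left(\frac{\partial g_{\ell j}}{\partial x_i}+\frac{\partial g_{i\ell}}{\partial x_j}-\frac{\partial g_{ij}}{\partial x_\ell}\right)$. $\|\cdot\|_{\mathcal{B}}$ is the operator norm. *)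

From HB Require Import structures.
From mathcomp Require Import all_boot all_order all_algebra.
From mathcomp Require Import all_classical all_reals all_analysis.
Set Implicit Arguments. Unset Strict Implicit. Unset Printing Implicit Defensive.
Import Order.TTheory GRing.Theory Num.Theory.
Import numFieldNormedType.Exports.
Local Open Scope classical_set_scope.
Local Open Scope ring_scope.

Definition norm2 {R : realType} {n : nat} (v : 'cV[R]_n) : R :=
  Num.sqrt (\sum_(i < n) v i 0 ^+ 2).

(* Euclidean norm of a row vector (points of R^D). *)
Definition rnorm2 {R : realType} {n : nat} (v : 'rV[R]_n) : R :=
  Num.sqrt (\sum_(i < n) v 0 i ^+ 2).

Definition opnorm {R : realType} {n : nat} (A : 'M[R]_n) : R :=
  sup [set r | exists v : 'cV[R]_n, norm2 v <= 1 /\ r = norm2 (A *m v)].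

Definition basisv {R : realType} {n : nat} (i : 'I_n) : 'rV[R]_n :=
  delta_mx 0 i.

Definition pderiv {R : realType} {n : nat} (f : 'rV[R]_n -> R) (i : 'I_n)
  (x : 'rV[R]_n) : R := 'D_(basisv i) f x.

Definition christoffel {R : realType} {n : nat} (H : 'rV[R]_n -> 'M[R]_n)
  (k i j : 'I_n) (x : 'rV[R]_n) : R :=
  2^-1 * \sum_(l < n) invmx (H x) k l *
    (pderiv (fun y => H y l j) i x + pderiv (fun y => H y i l) j x
     - pderiv (fun y => H y i j) l x).

From HB Require Import structures.
From mathcomp Require Import all_boot all_order all_algebra.
From mathcomp Require Import all_classical all_reals all_analysis.
From mathcomp Require Import ring lra.
Import Order.TTheory GRing.Theory Num.Theory.
Import numFieldNormedType.Exports.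
Local Open Scope classical_set_scope.
Local Open Scope ring_scope.
Set Implicit Arguments. Unset Strict Implicit.

(* Γ^k_ij is the k-th coordinate of H(x)^-1 w, where w_l = Γ_{l,ij} are the Christoffel
   symbols of the first kind. Lipschitz continuity of H in operator norm bounds every
   partial derivative of every entry of H by L_H, so |w_l| <= 3 L_H / 2 and
   |w| <= 3 L_H sqrt(D) / 2. Coercivity and weighted AM-GM give
   c1 |z|^2 <= z^T H z <= c1/2 |z|^2 + |H z|^2 / (2 c1), i.e. c1 |z| <= |H z|; hence
   |H^-1 w| <= |w| / c1, and a coordinate is bounded by the Euclidean norm. *)

Section MatrixNorms.
Variables (R : realType) (n : nat).
Implicit Types (v : 'cV[R]_n).

Lemma norm2_sqr v : norm2 v ^+ 2 = \sum_l v l 0 ^+ 2.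
Proof. by rewrite sqr_sqrtr // sumr_ge0 // => l _; rewrite sqr_ge0. Qed.

Lemma coord_le_norm2 v j : `|v j 0| <= norm2 v.
Proof.
rewrite /norm2 -sqrtr_sqr; apply: ler_wsqrtr.
by rewrite (bigD1 j) //= lerDl sumr_ge0 // => l _; rewrite sqr_ge0.
Qed.

Lemma norm2_0 : norm2 (0 : 'cV[R]_n) = 0.
Proof. by rewrite /norm2 big1 ?sqrtr0 // => l _; rewrite mxE expr0n. Qed.

Lemma norm2_eq0 v : norm2 v = 0 -> v = 0.
Proof.
move=> v0; apply/matrixP => l m; rewrite ord1 mxE.
by apply/normr0_eq0/eqP; rewrite eq_le normr_ge0 -v0 coord_le_norm2.
Qed.

Lemma norm2_le_coord_bound v (M : R) :
  (forall l, `|v l 0| <= M) -> 0 <= M -> norm2 v <= M * Num.sqrt n%:R.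
Proof.
move=> vM M0; rewrite -ler_sqr ?nnegrE ?mulr_ge0 ?sqrtr_ge0 //.
rewrite norm2_sqr exprMn sqr_sqrtr //.
have vM2 l : v l 0 ^+ 2 <= M ^+ 2.
  by rewrite -real_normK ?num_real // ler_sqr ?nnegrE.
apply: le_trans (ler_sum _ (fun l _ => vM2 l)) _.
by rewrite sumr_const card_ord mulr_natr.
Qed.

Lemma norm2_delta (b : 'I_n) : norm2 (delta_mx b 0 : 'cV[R]_n) = 1.
Proof.
rewrite /norm2 (bigD1 b) //= big1 ?addr0 => [|l /negbTE lb]; last first.
  by rewrite mxE lb expr0n.
by rewrite mxE !eqxx expr1n sqrtr1.
Qed.

Lemma rnorm2_scale_basisv (l : 'I_n) (h : R) : rnorm2 (h *: basisv l) = `|h|.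
Proof.
rewrite /rnorm2 (bigD1 l) //= big1 ?addr0 => [|m /negbTE ml]; last first.
  by rewrite !mxE ml andbF mulr0 expr0n.
by rewrite !mxE !eqxx mulr1 sqrtr_sqr.
Qed.

Lemma opnorm_has_ubound (A : 'M[R]_n) :
  has_ubound [set r | exists v : 'cV[R]_n, norm2 v <= 1 /\ r = norm2 (A *m v)].
Proof.
exists (Num.sqrt (\sum_i (\sum_j `|A i j|) ^+ 2)) => _ [v [v1 ->]].
apply: ler_wsqrtr; apply: ler_sum => i _.
rewrite -real_normK ?num_real // ler_sqr ?nnegrE ?sumr_ge0 //.
rewrite mxE; apply: le_trans (ler_norm_sum _ _ _) _; apply: ler_sum => j _.
by rewrite normrM ler_piMr // (le_trans (coord_le_norm2 v j)).
Qed.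

Lemma mxentry_le_opnorm (A : 'M[R]_n) a b : `|A a b| <= opnorm A.
Proof.
have -> : A a b = (A *m (delta_mx b 0 : 'cV_n)) a 0.
  rewrite mxE (bigD1 b) //= big1 => [|l /negbTE lb]; rewrite mxE ?lb ?mulr0 //.
  by rewrite !eqxx mulr1 addr0.
apply: le_trans (coord_le_norm2 _ _) _; apply: (ub_le_sup (opnorm_has_ubound A)).
by exists (delta_mx b 0 : 'cV_n); rewrite norm2_delta.
Qed.

End MatrixNorms.

Lemma pderiv_le_lipschitz (R : realType) n (f : 'rV[R]_n -> R) (L : R) l x :
  (forall y, `|f y - f x| <= L * rnorm2 (y - x)) ->
  derivable f x (basisv l) -> `|pderiv f l x| <= L.
Proof.
move=> fL df; apply: cvgr_to_le (cvg_norm df) _.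
near=> h; have h0 : h != 0 by near: h; exact: nbhs_dnbhs_neq.
rewrite normrZ normfV ler_pdivrMl ?normr_gt0 // mulrC /=.
rewrite -(rnorm2_scale_basisv l h) -[X in rnorm2 X](addrK x).
exact: fL.
Unshelve. all: by end_near.
Qed.

Lemma mulr_le_weighted_sqr (R : realFieldType) (a b c : R) :
  0 < c -> a * b <= c / 2 * a ^+ 2 + b ^+ 2 / (2 * c).
Proof.
move=> c0; rewrite -subr_ge0.
have -> : c / 2 * a ^+ 2 + b ^+ 2 / (2 * c) - a * b = (c * a - b) ^+ 2 / (2 * c).
  by field; rewrite gt_eqF.
by rewrite divr_ge0 ?sqr_ge0 // mulr_ge0 // ltW.
Qed.

Section Coercive.
Variables (R : realType) (n : nat) (A : 'M[R]_n) (c : R).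
Hypotheses (c_gt0 : 0 < c)
  (A_coercive : forall u : 'cV[R]_n, c * norm2 u ^+ 2 <= (u^T *m A *m u) 0 0).

Lemma coercive_norm2_mulmx z : c * norm2 z <= norm2 (A *m z).
Proof.
set w := A *m z.
have quad : (z^T *m A *m z) 0 0 = \sum_l z l 0 * w l 0.
  by rewrite -mulmxA mxE; apply: eq_bigr => l _; rewrite mxE.
have : c * norm2 z ^+ 2 <= c / 2 * norm2 z ^+ 2 + norm2 w ^+ 2 / (2 * c).
  apply: le_trans (A_coercive z) _.
  rewrite quad !norm2_sqr mulr_sumr mulr_suml -big_split.
  by apply: ler_sum => l _; apply: mulr_le_weighted_sqr.
rewrite -subr_le0 => amgm.
rewrite -ler_sqr ?nnegrE ?mulr_ge0 ?sqrtr_ge0 ?(ltW c_gt0) // exprMn.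
have -> : c ^+ 2 * norm2 z ^+ 2 = norm2 w ^+ 2 + 2 * c *
    (c * norm2 z ^+ 2 - (c / 2 * norm2 z ^+ 2 + norm2 w ^+ 2 / (2 * c))).
  by field; rewrite gt_eqF.
by rewrite gerDl pmulr_rle0 ?mulr_gt0.
Qed.

Lemma coercive_unitmx : A \in unitmx.
Proof.
rewrite unitmxE -det_tr unitfE; apply/negP => /det0P [v v0 vA].
have /(norm2_eq0 (v := v^T)) vT0 : norm2 v^T = 0.
  apply/eqP; rewrite eq_le sqrtr_ge0 andbT -(pmulr_rle0 _ c_gt0).
  apply: le_trans (coercive_norm2_mulmx _) _.
  by rewrite -[A]trmxK -trmx_mul vA trmx0 norm2_0.
by move/negP: v0; apply; rewrite -[v]trmxK vT0 trmx0.
Qed.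

Lemma coercive_norm2_invmx w : norm2 (invmx A *m w) <= norm2 w / c.
Proof.
rewrite ler_pdivlMr // mulrC; apply: le_trans (coercive_norm2_mulmx _) _.
by rewrite mulKVmx ?coercive_unitmx.
Qed.

End Coercive.

Section Christoffel.
Variables (R : realType) (n : nat) (H : 'rV[R]_n -> 'M[R]_n).

Lemma lipschitz_mxentry (LH : R) a b x y :
  (forall x y, opnorm (H x - H y) <= LH * rnorm2 (x - y)) ->
  `|H y a b - H x a b| <= LH * rnorm2 (y - x).
Proof.
move=> HL; have -> : H y a b - H x a b = (H y - H x) a b by rewrite !mxE.
exact: le_trans (mxentry_le_opnorm _ a b) (HL y x).
Qed.

Definition christoffel1 (i j : 'I_n) (x : 'rV[R]_n) : 'cV[R]_n :=
  \col_l (2^-1 * (pderiv (fun y => H y l j) i x + pderiv (fun y => H y i l) j x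
                  - pderiv (fun y => H y i j) l x)).

Lemma christoffelE k i j x :
  christoffel H k i j x = (invmx (H x) *m christoffel1 i j x) k 0.
Proof.
rewrite /christoffel mxE mulr_sumr; apply: eq_bigr => l _.
by rewrite !mxE mulrCA.
Qed.

Lemma christoffel1_le (L : R) i j x :
  (forall a b l, `|pderiv (fun y => H y a b) l x| <= L) ->
  forall l, `|christoffel1 i j x l 0| <= 3 * L / 2.
Proof.
move=> dH l; rewrite mxE normrM ger0_norm ?invr_ge0 //.
rewrite [3 * L / 2]mulrC ler_pM2l ?invr_gt0 //.
have := dH l j i; have := dH i l j; have := dH i j l.
rewrite !ler_norml => /andP[? ?] /andP[? ?] /andP[? ?].
apply/andP; split; lra.
Qed.

End Christoffel.

Theorem proposition7p10 (R : realType) (D : nat) (H : 'rV[R]_D -> 'M[R]_D)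
  (c1 LH : R) :
  (* g is a C^1 Riemannian metric: H(x) symmetric, entries C^1 *)
  (forall x, (H x)^T = H x) ->
  (forall (a b : 'I_D) x, differentiable (fun y => H y a b) x) ->
  (forall (a b l : 'I_D), continuous (pderiv (fun y => H y a b) l)) ->
  0 < c1 ->
  (forall x (u : 'cV[R]_D), c1 * norm2 u ^+ 2 <= (u^T *m H x *m u) 0 0) ->
  (forall x y, opnorm (H x - H y) <= LH * rnorm2 (x - y)) ->
  forall (i j k : 'I_D) x,
    `|christoffel H k i j x| <= 3 * LH * Num.sqrt (D%:R) / (2 * c1).
Proof.
move=> _ Hdiff _ c1_gt0 Hcoer HL i j k x.
have dH a b l : `|pderiv (fun y => H y a b) l x| <= LH.
  apply: pderiv_le_lipschitz (diff_derivable (Hdiff a b x)) => y.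
  exact: lipschitz_mxentry.
have G1 := christoffel1_le i j dH.
have M0 : 0 <= 3 * LH / 2 := le_trans (normr_ge0 _) (G1 i).
rewrite christoffelE; apply: le_trans (coord_le_norm2 _ k) _.
apply: le_trans (coercive_norm2_invmx c1_gt0 (Hcoer x) _) _.
rewrite invfM mulrA ler_pM2r ?invr_gt0 //.
by apply: le_trans (norm2_le_coord_bound G1 M0) _; rewrite mulrAC.
Qed.
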